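(* Let $(\mathcal C,\amalg)$ be a monoidal supercategory satisfying (C1)–(C4) below, and for a two-sided ideal $J$ of $B_n$ let $\Sigma(J)$ denote the two-sided ideal of $B_{n+1}$ generated by $\iota_{1,n}(1\otimes J)$. Then for every $\lambda\in\Lambda(B_n)$, $$\Sigma(J^\lambda)=\bigoplus_{\mu\in\Lambda(B_{n+1}),\ \lambda\subset\mu}J^\mu.$$ Conditions: (C1) there is a bijection $\mathbb N\to\mathrm{Ob}(\mathcal C)$, $n\mapsto[n]$, with $[n]\amalg[m]=[n+m]$; (C2) $\mathrm{Hom}_{\mathcal C}([n],[m])=0$ for $n\ne m$; (C3) $B_n=\mathrm{End}_{\mathcal C}([n])$ is a finite dimensional semisimple superalgebra; (C4) there is a partial order $\subset$ on $\Lambda(\mathcal C)=\coprod_n\Lambda(B_n)$ such that for every $\lambda\in\Lambda(B_n)$, $[B_1]\cdot[S_\lambda]=\sum_{\mu\in\Lambda(B_{n+1}),\ \lambda\subset\mu}c_{\lambda,\mu}[S_\mu]$ in $\mathrm K(\mathcal C)$ with all $c_{\lambda,\mu}$ positive integers.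
   Context: A supercategory is a category enriched in super vector spaces; a monoidal supercategory has a monoidal product on all morphisms obeying the Koszul sign rule. A finite dimensional superalgebra $B$ is semisimple if the abelian category of $B$-modules with even morphisms is semisimple. $\Lambda(B)$ is the set of isomorphism classes of simple left $B$-modules (odd isomorphisms allowed), $S_\lambda$ a representative, and $J^\lambda\subset B$ the sum of all left ideals of $B$ isomorphic to $S_\lambda$ or its parity shift $S_\lambda[1]$. The maps $\iota_{m,n}\colon B_m\otimes B_n\to B_{m+n}$, $f\otimes g\mapsto f\amalg g$, are superalgebra homomorphisms. $\mathrm K(B)$ is the Grothendieck group of finite length $B$-modules modulo $[M]=[M[1]]$; $\mathrm K(\mathcal C)=\bigoplus_n\mathrm K(B_n)$ with product $[M]\cdot[N]=[B_{m+n}\otimes_{B_m\otimes B_n}(M\otimes N)]$ (induction along $\iota_{m,n}$). *)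

From HB Require Import structures.
From mathcomp Require Import all_boot all_order all_algebra.

Set Implicit Arguments.
Unset Strict Implicit.
Unset Printing Implicit Defensive.

Import GRing.Theory.
Local Open Scope ring_scope.

(* Finite dimensional superalgebras over a field F.  The carrier is a finite  *)
(* dimensional F-vector space (vectType F); the algebra may be the zero       *)
(* algebra.  The Z/2-grading is given by the even part spart false and the    *)
(* odd part spart true.                                                       *)
Record superalg (F : fieldType) := SuperAlg {
  scar :> vectType F;
  smul : scar -> scar -> scar;
  sone : scar;
  smul_linl : forall (k : F) (a a' b : scar),
      smul (k *: a + a') b = k *: smul a b + smul a' b;
  smul_linr : forall (k : F) (a b b' : scar),
      smul a (k *: b + b') = k *: smul a b + smul a b';
  smulA : forall a b c, smul a (smul b c) = smul (smul a b) c;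
  smul1l : forall a, smul sone a = a;
  smul1r : forall a, smul a sone = a;
  spart : bool -> {vspace scar};
  spart_direct : directv (spart false + spart true);
  spart_full : (spart false + spart true)%VS = fullv;
  spart_one : sone \in spart false;
  spart_mul : forall (i j : bool) a b, a \in spart i -> b \in spart j ->
      smul a b \in spart (i (+) j)
}.

Record supermod (F : fieldType) (A : superalg F) := SuperMod {
  mcar :> vectType F;
  mpart : bool -> {vspace mcar};
  mpart_direct : directv (mpart false + mpart true);
  mpart_full : (mpart false + mpart true)%VS = fullv;
  act : A -> mcar -> mcar;
  act_linl : forall (k : F) (a a' : A) (v : mcar),
      act (k *: a + a') v = k *: act a v + act a' v;
  act_linr : forall (k : F) (a : A) (v w : mcar),
      act a (k *: v + w) = k *: act a v + act a w;
  act1 : forall v, act (sone A) v = v;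
  actM : forall a b v, act (smul a b) v = act a (act b v);
  act_grade : forall (i j : bool) a v, a \in spart A i -> v \in mpart j ->
      act a v \in mpart (i (+) j)
}.

Arguments act {F A} s a v.

Section SuperDefs.
Variable F : fieldType.

Section OneAlg.
Variable A : superalg F.

Definition gsubmod (M : supermod A) (U : {vspace M}) : Prop :=
  U = (U :&: mpart M false + U :&: mpart M true)%VS /\
  (forall (a : A) v, v \in U -> act M a v \in U).

Definition simple_mod (M : supermod A) : Prop :=
  (fullv : {vspace M}) != 0%VS /\
  forall U : {vspace M}, gsubmod U -> U = 0%VS \/ U = fullv.

Definition pmorph (M N : supermod A) (p : bool) (f : 'Hom(M, N)) : Prop :=
  (forall (a : A) v, f (act M a v) = act N a (f v)) /\
  (forall (i : bool) v, v \in mpart M i -> f v \in mpart N (i (+) p)).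

(* M and N are isomorphic, odd isomorphisms allowed (i.e. M ~ N or M ~ N[1]) *)
Definition iso_mod (M N : supermod A) : Prop :=
  exists (p : bool) (f : 'Hom(M, N)),
    pmorph p f /\ lker f = 0%VS /\ limg f = fullv.

(* semisimplicity: the abelian category of A-supermodules with even          *)
(* morphisms is semisimple (every graded submodule has a graded complement)   *)
Definition semisimple : Prop :=
  forall (M : supermod A) (U : {vspace M}), gsubmod U ->
    exists W : {vspace M},
      gsubmod W /\ directv (U + W) /\ (U + W)%VS = fullv.

Definition ideal_iso (S : supermod A) (L : {vspace A}) : Prop :=
  exists (p : bool) (f : 'Hom(S, A)),
    (forall (a : A) v, f (act S a v) = smul a (f v)) /\
    (forall (i : bool) v, v \in mpart S i -> f v \in spart A (i (+) p)) /\
    lker f = 0%VS /\ limg f = L.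

(* J^lambda for lambda = [S]: the sum of all left ideals of A isomorphic to   *)
(* S or S[1] (given as a membership predicate on A).                          *)
Definition inJ (S : supermod A) (a : A) : Prop :=
  exists ls : seq {vspace A},
    (forall L, L \in ls -> ideal_iso S L) /\ a \in (\sum_(L <- ls) L)%VS.

Definition comp_series (M : supermod A) (s : seq {vspace M}) : Prop :=
  (0 < size s)%N /\
  nth 0%VS s 0 = 0%VS /\ nth 0%VS s (size s).-1 = fullv /\
  (forall i, (i < size s)%N -> gsubmod (nth 0%VS s i)) /\
  (forall i, (i.+1 < size s)%N ->
     (nth 0%VS s i <= nth 0%VS s i.+1)%VS /\ nth 0%VS s i != nth 0%VS s i.+1 /\
     forall W : {vspace M}, gsubmod W ->
       (nth 0%VS s i <= W)%VS -> (W <= nth 0%VS s i.+1)%VS ->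
       W = nth 0%VS s i \/ W = nth 0%VS s i.+1).

Definition factor_iso (M : supermod A) (U V : {vspace M}) (T : supermod A)
    : Prop :=
  exists (p : bool) (f : 'Hom(M, T)),
    (forall (a : A) v, v \in V -> f (act M a v) = act T a (f v)) /\
    (forall (i : bool) v, v \in (V :&: mpart M i)%VS ->
        f v \in mpart T (i (+) p)) /\
    (f @: V)%VS = fullv /\ (V :&: lker f)%VS = U.

(* the composition series s of M has exactly k subquotients isomorphic to T   *)
(* (up to parity shift); by Jordan-Hoelder this is the coefficient of [T] in  *)
(* the class [M] in K(A) = Grothendieck group modulo [M] = [M[1]].            *)
Definition mult_is (M : supermod A) (s : seq {vspace M}) (T : supermod A)
    (k : nat) : Prop :=
  exists idx : seq nat,
    uniq idx /\ size idx = k /\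
    forall i, i \in idx <->
      ((i.+1 < size s)%N /\ factor_iso (nth 0%VS s i) (nth 0%VS s i.+1) T).

End OneAlg.

(* Induction along an even unital algebra map phi : A -> A':                  *)
(* (I, u) is the induced module A' (x)_A S, characterised by its universal    *)
(* property (left adjoint of restriction along phi, even morphisms).          *)
Definition res_hom (A A' : superalg F) (phi : A -> A') (S : supermod A)
    (N : supermod A') (g : 'Hom(S, N)) : Prop :=
  (forall (b : A) v, g (act S b v) = act N (phi b) (g v)) /\
  (forall (i : bool) v, v \in mpart S i -> g v \in mpart N i).

Definition is_induced (A A' : superalg F) (phi : A -> A') (S : supermod A)
    (I : supermod A') (u : 'Hom(S, I)) : Prop :=
  res_hom phi u /\
  forall (N : supermod A') (g : 'Hom(S, N)), res_hom phi g ->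
    exists! h : 'Hom(I, N), pmorph false h /\ (h \o u = g)%VF.

Definition in_gen_ideal (A A' : superalg F) (phi : A -> A') (P : A -> Prop)
    (a : A') : Prop :=
  exists s : seq (A' * A * A'),
    (forall t, t \in s -> P t.1.2) /\
    a = \sum_(t <- s) smul (smul t.1.1 (phi t.1.2)) t.2.

(* A monoidal supercategory satisfying (C1)-(C3): objects [n], n : nat, with  *)
(* [n] || [m] = [n+m]; only endomorphism spaces B n = End([n]) are nonzero;   *)
(* the monoidal product of morphisms is tens m n : B m -> B n -> B (m + n).   *)
Record monoidal_super (B : nat -> superalg F)
    (tens : forall m n, B m -> B n -> B (m + n)%N) : Prop := MonoidalSuper {
  tens_linl : forall m n (k : F) (f f' : B m) (g : B n),
      tens m n (k *: f + f') g = k *: tens m n f g + tens m n f' g;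
  tens_linr : forall m n (k : F) (f : B m) (g g' : B n),
      tens m n f (k *: g + g') = k *: tens m n f g + tens m n f g';
  tens_even : forall m n (i j : bool) (f : B m) (g : B n),
      f \in spart (B m) i -> g \in spart (B n) j ->
      tens m n f g \in spart (B (m + n)%N) (i (+) j);
  tens_interchange : forall m n (i j : bool) (f h : B m) (g k : B n),
      g \in spart (B n) j -> h \in spart (B m) i ->
      smul (tens m n f g) (tens m n h k) =
      (-1) ^+ (i && j) *: tens m n (smul f h) (smul g k);
  tens_id : forall m n, tens m n (sone (B m)) (sone (B n)) = sone (B (m + n)%N);
  tens_assoc : forall m n p (f : B m) (g : B n) (h : B p),
      tens (m + n)%N p (tens m n f g) h =
      eq_rect _ (fun q => B q) (tens m (n + p) f (tens n p g h)) _ (addnA m n p);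
  tens_unitl : forall n (f : B n), tens 0 n (sone (B 0)) f = f;
  tens_unitr : forall n (f : B n),
      eq_rect _ (fun q => B q) (tens n 0 f (sone (B 0))) _ (addn0 n) = f
}.

(* A partial order on Lambda(C) = coprod_n Lambda(B n), given on             *)
(* representatives and required to be compatible with isomorphism classes.    *)
Record class_porder (B : nat -> superalg F)
    (sub : forall m k, supermod (B m) -> supermod (B k) -> Prop) : Prop :=
  ClassPorder {
  sub_compat : forall m k (S S' : supermod (B m)) (T T' : supermod (B k)),
      simple_mod S -> simple_mod T -> iso_mod S S' -> iso_mod T T' ->
      sub m k S T -> sub m k S' T';
  sub_refl : forall m (S : supermod (B m)), simple_mod S -> sub m m S S;
  sub_trans : forall m k l (S : supermod (B m)) (T : supermod (B k))
      (U : supermod (B l)), simple_mod S -> simple_mod T -> simple_mod U ->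
      sub m k S T -> sub k l T U -> sub m l S U;
  sub_antisym_deg : forall m k (S : supermod (B m)) (T : supermod (B k)),
      simple_mod S -> simple_mod T -> sub m k S T -> sub k m T S -> m = k;
  sub_antisym : forall m (S T : supermod (B m)),
      simple_mod S -> simple_mod T -> sub m m S T -> sub m m T S -> iso_mod S T
}.

(* iota_{1,n}(1 (x) b) = 1_{[1]} || b *)
Definition iota1 (B : nat -> superalg F)
    (tens : forall m n, B m -> B n -> B (m + n)%N) (n : nat) (b : B n) : B n.+1 :=
  tens 1 n (sone (B 1)) b.

(* (C4): for lambda = [S] in Lambda(B n), [B 1] . [S] = sum_{lambda < mu}     *)
(* c_{lambda,mu} [S_mu] with all c_{lambda,mu} positive integers.  Here        *)
(* [B 1].[S] is the class of B_{n+1} (x)_{B_1 (x) B_n} (B_1 (x) S), which is   *)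
(* the module induced from S along b |-> iota_{1,n}(1 (x) b); equality in      *)
(* K(B_{n+1}) is expressed through composition multiplicities.                 *)
Definition cond_C4 (B : nat -> superalg F)
    (tens : forall m n, B m -> B n -> B (m + n)%N)
    (sub : forall m k, supermod (B m) -> supermod (B k) -> Prop) : Prop :=
  forall n (S : supermod (B n)), simple_mod S ->
  forall (I : supermod (B n.+1)) (u : 'Hom(S, I)),
    is_induced (iota1 tens (n:=n)) u ->
  forall s : seq {vspace I}, comp_series s ->
  forall T : supermod (B n.+1), simple_mod T ->
  forall k : nat, mult_is s T k ->
    (sub n n.+1 S T <-> (0 < k)%N).

End SuperDefs.

From HB Require Import structures.
From mathcomp Require Import all_boot all_order all_algebra.
From Stdlib Require Import Classical.
Import GRing.Theory.
Local Open Scope ring_scope.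

Set Implicit Arguments.
Unset Strict Implicit.
Unset Printing Implicit Defensive.

Section LinearFun.
Variables (F : fieldType) (U V : vectType F) (f : U -> V).
Hypothesis f_lin : linear f.

Definition lfun_of_linear : 'Hom(U, V) :=
  linfun (HB.pack_for {linear U -> V} f (GRing.isLinear.Build F U V _ f f_lin)).

Lemma lfun_of_linearE x : lfun_of_linear x = f x.
Proof. exact: lfunE. Qed.

Lemma linear_fun0 : f 0 = 0.
Proof. by rewrite -lfun_of_linearE linear0. Qed.

Lemma linear_funD x y : f (x + y) = f x + f y.
Proof. by rewrite -!lfun_of_linearE linearD. Qed.

Lemma linear_fun_sum I (r : seq I) (P : pred I) (g : I -> U) :
  f (\sum_(i <- r | P i) g i) = \sum_(i <- r | P i) f (g i).
Proof.
by rewrite -lfun_of_linearE linear_sum; apply: eq_bigr => i _; exact: lfun_of_linearE.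
Qed.

End LinearFun.

Lemma lfunD (F : fieldType) (U V : vectType F) (f : 'Hom(U, V)) x y :
  f (x + y) = f x + f y.
Proof. exact: linearD. Qed.

Section VspaceExtremal.
Variables (F : fieldType) (V : vectType F) (P : {vspace V} -> Prop).

Lemma vspace_min U : P U ->
  exists U0, [/\ P U0, (U0 <= U)%VS & forall W, P W -> (W <= U0)%VS -> W = U0].
Proof.
move Hk : (\dim U) => k; elim: k {-2}k (leqnn k) U Hk => [|k IH] k' le_k' U dimU PU.
  exists U; split=> // W _ sWU; apply/eqP; rewrite eqEdim sWU.
  by rewrite dimU (leq_trans le_k').
have [[W [PW sWU nWU]] | minU] :=
  classic (exists W, [/\ P W, (W <= U)%VS & W != U]); last first.
  exists U; split=> // W PW sWU; apply: NNPP => nWU.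
  by apply: minU; exists W; split=> //; apply/eqP.
have ltW : (\dim W < \dim U)%N by rewrite (ltn_leqif (dimv_leqif_eq sWU)).
have [U0 [PU0 sU0W minU0]] : exists U0,
    [/\ P U0, (U0 <= W)%VS & forall W', P W' -> (W' <= U0)%VS -> W' = U0].
  by apply: (IH (\dim W)) => //; rewrite -ltnS (leq_trans _ le_k') // -dimU.
by exists U0; split=> //; apply: subv_trans sWU.
Qed.

Lemma vspace_max U : P U ->
  exists U1, [/\ P U1, (U <= U1)%VS & forall W, P W -> (U1 <= W)%VS -> W = U1].
Proof.
move Hk : (\dim {:V} - \dim U)%N => k.
elim: k {-2}k (leqnn k) U Hk => [|k IH] k' le_k' U codimU PU.
  exists U; split=> // W _ sUW; apply/eqP; rewrite eq_sym eqEdim sUW /=.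
  apply: leq_trans (dimvS (subvf W)) _.
  by move: le_k'; rewrite leqn0 -codimU subn_eq0.
have [[W [PW sUW nWU]] | maxU] :=
  classic (exists W, [/\ P W, (U <= W)%VS & W != U]); last first.
  exists U; split=> // W PW sUW; apply: NNPP => nWU.
  by apply: maxU; exists W; split=> //; apply/eqP.
have ltU : (\dim U < \dim W)%N by rewrite (ltn_leqif (dimv_leqif_eq sUW)) eq_sym.
have leW : (\dim W <= \dim {:V})%N by apply/dimvS/subvf.
have [U1 [PU1 sWU1 maxU1]] : exists U1,
    [/\ P U1, (W <= U1)%VS & forall W', P W' -> (U1 <= W')%VS -> W' = U1].
  apply: (IH (\dim {:V} - \dim W)%N) => //; rewrite -ltnS (leq_trans _ le_k') //.
  by rewrite -codimU ltn_sub2l // (leq_trans ltU).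
by exists U1; split=> //; apply: subv_trans sWU1.
Qed.

End VspaceExtremal.

Lemma sumv_ind (F : fieldType) (V : vectType F) (ls : seq {vspace V})
    (Q : V -> Prop) x :
  x \in (\sum_(L <- ls) L)%VS -> Q 0 -> (forall a b, Q a -> Q b -> Q (a + b)) ->
  (forall L y, L \in ls -> y \in L -> Q y) -> Q x.
Proof.
move=> Hx Q0 QD QL; elim: ls x Hx QL => [|L ls IH] x Hx QL.
  by move: Hx; rewrite big_nil memv0 => /eqP ->.
move: Hx; rewrite big_cons => /memv_addP [a Ha [b Hb ->]].
apply: QD; first by apply: (QL L) => //; rewrite mem_head.
by apply: IH => // L' y HL' Hy; apply: (QL L') => //; rewrite inE HL' orbT.
Qed.

Lemma enum_prop_lt (P : nat -> Prop) r :
  exists idx : seq nat, uniq idx /\ forall i, i \in idx <-> (i < r)%N /\ P i.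
Proof.
elim: r => [|r [idx [uidx idxP]]]; first by exists [::]; split=> // i; split=> // [[]].
have r_idx : r \notin idx by apply/negP => /idxP []; rewrite ltnn.
have [Pr | nPr] := classic (P r).
  exists (rcons idx r); rewrite rcons_uniq r_idx uidx; split=> // i.
  rewrite mem_rcons inE; split=> [/orP [/eqP -> // | /idxP [lt Pi]] | [le Pi]].
    by rewrite ltnS ltnW.
  move: le; rewrite ltnS leq_eqVlt => /orP [-> // | lt].
  by apply/orP; right; apply/idxP.
exists idx; split=> // i; split=> [/idxP [lt Pi] | [le Pi]].
  by rewrite ltnS ltnW.
move: le; rewrite ltnS leq_eqVlt => /orP [/eqP Ei | lt]; first by rewrite Ei in Pi.
exact/idxP.
Qed.

Lemma sum_neq0 (V : nmodType) (I : eqType) (r : seq I) (G : I -> V) :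
  \sum_(i <- r) G i != 0 -> exists2 i, i \in r & G i != 0.
Proof.
elim: r => [|i r IH]; first by rewrite big_nil eqxx.
rewrite big_cons; have [Gi0 | ] := eqVneq (G i) 0; last by exists i; rewrite ?mem_head.
by rewrite Gi0 add0r => /IH [j rj Gj]; exists j; rewrite // inE rj orbT.
Qed.

Lemma daddv_pi_eq0 (F : fieldType) (V : vectType F) (U W : {vspace V}) w :
  (U :&: W = 0)%VS -> w \in W -> daddv_pi U W w = 0.
Proof.
move=> dxUW Ww; have dxWU : (W :&: U = 0)%VS by rewrite capvC.
have := daddv_pi_add dxUW (memv_add (mem0v U) Ww).
by rewrite add0r (daddv_pi_id dxWU Ww) => /(canRL (addrK w)); rewrite subrr.
Qed.

Section GradedSpace.
Variables (F : fieldType) (V : vectType F) (P : bool -> {vspace V}).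

Definition gproj i : 'Hom(V, V) := daddv_pi (P i) (P (~~ i)).

Definition graded (U : {vspace V}) := U = (U :&: P false + U :&: P true)%VS.

Lemma gproj_mem i v : gproj i v \in P i.
Proof. exact: memv_pi. Qed.

Hypotheses (P_direct : directv (P false + P true))
           (P_full : (P false + P true)%VS = fullv).

Lemma capv_parts i : (P i :&: P (~~ i) = 0)%VS.
Proof. by move/directv_addP: P_direct; case: i => //=; rewrite capvC. Qed.

Lemma gproj_id i v : v \in P i -> gproj i v = v.
Proof. exact: daddv_pi_id (capv_parts i). Qed.

Lemma gproj_eq0 i v : v \in P (~~ i) -> gproj i v = 0.
Proof. exact: daddv_pi_eq0 (capv_parts i). Qed.

Lemma gproj_sum i v : gproj i v + gproj (~~ i) v = v.
Proof.
rewrite /gproj negbK (daddv_pi_add (capv_parts i)) //.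
by case: i; rewrite /= ?[(P true + _)%VS]addvC P_full memvf.
Qed.

Lemma graded_gproj (U : {vspace V}) i v : graded U -> v \in U -> gproj i v \in U.
Proof.
move=> gU; rewrite {1}gU => /memv_addP [u0 Hu0 [u1 Hu1 ->]].
move: Hu0 Hu1; rewrite !memv_cap => /andP[U0 P0] /andP[U1 P1].
rewrite lfunD; case: i.
  by rewrite (gproj_eq0 (i:=true) P0) (gproj_id P1) add0r.
by rewrite (gproj_id P0) (gproj_eq0 (i:=false) P1) addr0.
Qed.

Lemma gradedP (U : {vspace V}) : (forall i v, v \in U -> gproj i v \in U) -> graded U.
Proof.
move=> UP; apply/eqP; rewrite eqEsubv subv_add !capvSl !andbT.
apply/subvP=> v Uv; rewrite -(gproj_sum false v) memv_add //.
by rewrite memv_cap UP ?gproj_mem.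
by rewrite memv_cap UP ?gproj_mem.
Qed.

End GradedSpace.

Lemma gproj_hom (F : fieldType) (V W : vectType F)
    (P : bool -> {vspace V}) (Q : bool -> {vspace W}) (f : 'Hom(V, W)) p :
  directv (P false + P true) -> (P false + P true)%VS = fullv ->
  directv (Q false + Q true) ->
  (forall i v, v \in P i -> f v \in Q (i (+) p)) ->
  forall i v, f (gproj P i v) = gproj Q (i (+) p) (f v).
Proof.
move=> dxP fP dxQ fH i v; rewrite -{2}(gproj_sum dxP fP i v) !lfunD.
rewrite (gproj_id dxQ (fH _ _ (gproj_mem P i v))) (gproj_eq0 dxQ) ?addr0 //.
by rewrite -addNb fH ?gproj_mem.
Qed.

Section SuperAlgebra.
Variables (F : fieldType) (A : superalg F).

Lemma smul_linear_l (b : A) : linear (fun a : A => smul a b).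
Proof. by move=> k a a'; rewrite smul_linl. Qed.

Lemma smul_linear_r (a : A) : linear (smul a).
Proof. by move=> k b b'; rewrite smul_linr. Qed.

Lemma smul0l (b : A) : smul 0 b = 0.
Proof. exact: linear_fun0 (smul_linear_l b). Qed.

Lemma smul0r (a : A) : smul a 0 = 0.
Proof. exact: linear_fun0 (smul_linear_r a). Qed.

Lemma smulDl (a a' b : A) : smul (a + a') b = smul a b + smul a' b.
Proof. exact: (linear_funD (smul_linear_l b) a a'). Qed.

Lemma smulDr (a b b' : A) : smul a (b + b') = smul a b + smul a b'.
Proof. exact: (linear_funD (smul_linear_r a) b b'). Qed.

Lemma smul_suml I (r : seq I) (P : pred I) (g : I -> A) b :
  smul (\sum_(i <- r | P i) g i) b = \sum_(i <- r | P i) smul (g i) b.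
Proof. exact: (linear_fun_sum (smul_linear_l b) r P g). Qed.

Lemma smul_sumr I (r : seq I) (P : pred I) (g : I -> A) a :
  smul a (\sum_(i <- r | P i) g i) = \sum_(i <- r | P i) smul a (g i).
Proof. exact: (linear_fun_sum (smul_linear_r a) r P g). Qed.

Definition regmod : supermod A :=
  @SuperMod F A A (spart A) (spart_direct A) (spart_full A) (@smul F A)
    (@smul_linl F A) (@smul_linr F A) (@smul1l F A)
    (fun a b v => esym (smulA a b v)) (@spart_mul F A).

Definition lideal (L : {vspace A}) := gsubmod (M := regmod) L.

Definition min_lideal (L : {vspace A}) :=
  [/\ lideal L, L != 0%VS & forall U, lideal U -> (U <= L)%VS -> U = 0%VS \/ U = L].

End SuperAlgebra.

Section GeneratedIdeal.
Variables (F : fieldType) (A A' : superalg F) (f : A -> A') (P : A -> Prop).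

Lemma in_gen_ideal0 : in_gen_ideal f P 0.
Proof. by exists [::]; rewrite big_nil. Qed.

Lemma in_gen_idealD x y :
  in_gen_ideal f P x -> in_gen_ideal f P y -> in_gen_ideal f P (x + y).
Proof.
move=> [sx [sxP ->]] [sy [syP ->]]; exists (sx ++ sy); rewrite big_cat.
by split=> // t; rewrite mem_cat => /orP [/sxP | /syP].
Qed.

Lemma in_gen_ideal_sum r (x : nat -> A') :
  (forall i, (i < r)%N -> in_gen_ideal f P (x i)) ->
  in_gen_ideal f P (\sum_(i < r) x i).
Proof.
elim: r => [|r IH] xP; first by rewrite big_ord0; apply: in_gen_ideal0.
rewrite big_ord_recr /=; apply: in_gen_idealD; last exact: xP.
by apply: IH => i ltir; apply/xP/ltnW.
Qed.

Lemma in_gen_ideal_gen x y z : P y -> in_gen_ideal f P (smul (smul x (f y)) z).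
Proof.
by move=> Py; exists [:: (x, y, z)]; rewrite big_seq1; split=> // t; rewrite inE => /eqP ->.
Qed.

End GeneratedIdeal.

Section SuperModule.
Variables (F : fieldType) (A : superalg F) (M : supermod A).

Lemma act_linear_l (v : M) : linear (fun a : A => act M a v).
Proof. by move=> k a a'; rewrite act_linl. Qed.

Lemma act_linear_r (a : A) : linear (act M a).
Proof. by move=> k v w; rewrite act_linr. Qed.

Lemma act0r a : act M a 0 = 0.
Proof. exact: linear_fun0 (act_linear_r a). Qed.

Lemma actDr a v w : act M a (v + w) = act M a v + act M a w.
Proof. exact: (linear_funD (act_linear_r a) v w). Qed.

Lemma gsub0 : gsubmod (0%VS : {vspace M}).
Proof.
split=> [|a v]; first by rewrite !cap0v addv0.
by rewrite memv0 => /eqP ->; rewrite act0r mem0v.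
Qed.

Lemma gsubf : gsubmod (fullv : {vspace M}).
Proof. by split=> [|a v _]; rewrite ?memvf // !capfv mpart_full. Qed.

Lemma gsub_gproj (U : {vspace M}) i v :
  gsubmod U -> v \in U -> gproj (mpart M) i v \in U.
Proof. by case=> gU _ Uv; apply: (graded_gproj (mpart_direct M) i gU Uv). Qed.

Lemma gsub_cap (U W : {vspace M}) : gsubmod U -> gsubmod W -> gsubmod (U :&: W)%VS.
Proof.
move=> gU gW; split=> [|a v].
  apply: (gradedP (mpart_direct M) (mpart_full M)) => i v.
  by rewrite !memv_cap => /andP [Uv Wv]; rewrite !gsub_gproj.
by rewrite !memv_cap => /andP [Uv Wv]; rewrite gU.2 // gW.2.
Qed.

Lemma gsub_compl (U V : {vspace M}) : semisimple A -> gsubmod U -> gsubmod V ->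
  (U <= V)%VS -> exists W : {vspace M},
    [/\ gsubmod W, (W <= V)%VS, (U :&: W = 0)%VS & (U + W)%VS = V].
Proof.
move=> ssA gU gV sUV; have [W0 [gW0 [/directv_addP dxUW0 UW0]]] := ssA M U gU.
exists (V :&: W0)%VS; split; first exact: gsub_cap.
- exact: capvSl.
- by apply/eqP; rewrite -subv0 -dxUW0 capvS // capvSr.
apply/eqP; rewrite eqEsubv subv_add sUV capvSl /=.
apply/subvP => v Vv; have /memv_addP [u Uu [w Ww Ev]] : v \in (U + W0)%VS.
  by rewrite UW0 memvf.
have Vw : w \in V.
  by rewrite -(addKr u w) -Ev; apply: memvD => //; rewrite memvN; apply: (subvP sUV).
by rewrite Ev memv_add // memv_cap Vw.
Qed.

Lemma daddv_pi_act (V W : {vspace M}) a v :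
  gsubmod V -> gsubmod W -> (V :&: W = 0)%VS -> (V + W)%VS = fullv ->
  daddv_pi V W (act M a v) = act M a (daddv_pi V W v).
Proof.
move=> gV gW dxVW VW.
have VWv : v \in (V + W)%VS by rewrite VW memvf.
have Ev := daddv_pi_add dxVW VWv.
rewrite -{1}Ev actDr lfunD (daddv_pi_id dxVW (gV.2 _ _ (memv_pi _ _ _))).
by rewrite (daddv_pi_eq0 dxVW (gW.2 _ _ (memv_pi _ _ _))) addr0.
Qed.

Definition comp_chain (V : {vspace M}) (s : seq {vspace M}) : Prop :=
  (0 < size s)%N /\
  nth 0%VS s 0 = 0%VS /\ nth 0%VS s (size s).-1 = V /\
  (forall i, (i < size s)%N -> gsubmod (nth 0%VS s i)) /\
  (forall i, (i.+1 < size s)%N ->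
     (nth 0%VS s i <= nth 0%VS s i.+1)%VS /\ nth 0%VS s i != nth 0%VS s i.+1 /\
     forall W : {vspace M}, gsubmod W ->
       (nth 0%VS s i <= W)%VS -> (W <= nth 0%VS s i.+1)%VS ->
       W = nth 0%VS s i \/ W = nth 0%VS s i.+1).

Lemma max_gsub (V : {vspace M}) : gsubmod V -> V != 0%VS ->
  exists U, [/\ gsubmod U, (U <= V)%VS, U != V &
    forall W, gsubmod W -> (U <= W)%VS -> (W <= V)%VS -> W = U \/ W = V].
Proof.
move=> gV nV0; pose P U := [/\ gsubmod U, (U <= V)%VS & U != V].
have P0 : P 0%VS by split; [exact: gsub0 | exact: sub0v | rewrite eq_sym].
have [U [[gU sUV nUV] _ maxU]] := vspace_max P0.
exists U; split=> // W gW sUW sWV.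
by case: (eqVneq W V) => [-> | nWV]; [right | left; apply: maxU].
Qed.

Lemma comp_chain_rcons (U V : {vspace M}) s : comp_chain U s -> gsubmod V ->
  (U <= V)%VS -> U != V ->
  (forall W, gsubmod W -> (U <= W)%VS -> (W <= V)%VS -> W = U \/ W = V) ->
  comp_chain V (rcons s V).
Proof.
move=> [s_gt0 [s_0 [s_last [gs steps]]]] gV sUV nUV maxU.
have nthE i : nth 0%VS (rcons s V) i =
    if (i < size s)%N then nth 0%VS s i else if i == size s then V else 0%VS.
  exact: nth_rcons.
rewrite /comp_chain size_rcons; split=> //; split; first by rewrite nthE s_gt0.
split; first by rewrite nthE ltnn eqxx.
split.
  move=> i; rewrite ltnS leq_eqVlt nthE => /orP [/eqP -> | lti].
    by rewrite ltnn eqxx.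
  by rewrite lti; apply: gs.
move=> i; rewrite ltnS leq_eqVlt !nthE => /orP [/eqP Ei | lti].
  have lti : (i < size s)%N by rewrite -Ei.
  have -> : nth 0%VS s i = U by rewrite -s_last -Ei.
  by rewrite lti Ei ltnn eqxx.
by rewrite (ltnW lti) lti; apply: steps.
Qed.

Lemma comp_chain_exists (V : {vspace M}) : gsubmod V -> exists s, comp_chain V s.
Proof.
elim: {V}(\dim V).+1 {-2}V (ltnSn (\dim V)) => // k IH V ltVk gV.
have [-> | nV0] := eqVneq V 0%VS.
  exists [:: 0%VS]; do 4!split=> //.
  by move=> i; rewrite ltnS leqn0 => /eqP ->; apply: gsub0.
have [U [gU sUV nUV maxU]] := max_gsub gV nV0.
have ltU : (\dim U < k)%N.
  by rewrite (leq_trans _ (ltVk : \dim V <= k)%N) // (ltn_leqif (dimv_leqif_eq sUV)).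
have [c chain_c] := IH U ltU gU.
by exists (rcons c V); apply: (comp_chain_rcons chain_c).
Qed.

Lemma comp_series_exists : exists s : seq {vspace M}, comp_series s.
Proof. exact: comp_chain_exists gsubf. Qed.

Lemma mult_is_exists (s : seq {vspace M}) (T : supermod A) :
  exists k, mult_is s T k.
Proof.
have [idx [uidx idxP]] := enum_prop_lt
  (fun i => factor_iso (nth 0%VS s i) (nth 0%VS s i.+1) T) (size s).-1.
by exists (size idx), idx; do 2!split=> //; move=> i; rewrite -ltn_predRL.
Qed.

Lemma mult_is_gt0 (s : seq {vspace M}) (T : supermod A) k : mult_is s T k ->
  (0 < k)%N <-> exists j,
    (j.+1 < size s)%N /\ factor_iso (nth 0%VS s j) (nth 0%VS s j.+1) T.
Proof.
move=> [idx [_ [<- idxP]]]; split.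
  by move: idxP; case: idx => // j idx idxP; exists j; apply/idxP/mem_head.
by case=> j /idxP; case: idx {idxP}.
Qed.

End SuperModule.

Section PMorph.
Variables (F : fieldType) (A : superalg F) (M N : supermod A).
Variables (p : bool) (f : 'Hom(M, N)).
Hypothesis fP : pmorph p f.

Lemma pmorph_gproj i v :
  f (gproj (mpart M) (i (+) p) v) = gproj (mpart N) i (f v).
Proof.
rewrite (gproj_hom (mpart_direct M) (mpart_full M) (mpart_direct N) fP.2).
by rewrite -addbA addbb addbF.
Qed.

Lemma pmorph_img_gsub (V : {vspace M}) : gsubmod V -> gsubmod (f @: V)%VS.
Proof.
move=> gV; split=> [|a y /memv_imgP [v Vv ->]]; last first.
  by rewrite -fP.1 memv_img // gV.2.
apply: (gradedP (mpart_direct N) (mpart_full N)) => i y /memv_imgP [v Vv ->].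
by rewrite -pmorph_gproj memv_img // gsub_gproj.
Qed.

Lemma pmorph_ker_gsub (V : {vspace M}) : gsubmod V -> gsubmod (V :&: lker f)%VS.
Proof.
move=> gV; split=> [|a v]; last first.
  by rewrite !memv_cap !memv_ker => /andP [Vv /eqP fv0]; rewrite gV.2 // fP.1 fv0 act0r eqxx.
apply: (gradedP (mpart_direct M) (mpart_full M)) => i v.
rewrite !memv_cap !memv_ker => /andP [Vv /eqP fv0].
by rewrite gsub_gproj //= -[i](addbK p) pmorph_gproj fv0 linear0.
Qed.

Lemma pmorph_inj_mpart (U : {vspace M}) i x : gsubmod U ->
  (forall y, y \in U -> f y = 0 -> y = 0) -> x \in U -> f x \in mpart N i ->
  x \in mpart M (i (+) p).
Proof.
move=> gU f_inj Ux fx.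
have x'0 : gproj (mpart M) (~~ i (+) p) x = 0.
  apply: f_inj; first exact: gsub_gproj.
  by rewrite pmorph_gproj (gproj_eq0 (mpart_direct N)) // negbK.
rewrite -(gproj_sum (mpart_direct M) (mpart_full M) (i (+) p) x) -addNb x'0 addr0.
exact: gproj_mem.
Qed.

End PMorph.

Section CompositionFactor.
Variables (F : fieldType) (A : superalg F) (M T : supermod A).

Lemma factor_iso_of_pmorph (cs : seq {vspace M}) p (f : 'Hom(M, T)) :
  comp_series cs -> simple_mod T -> pmorph p f -> limg f != 0%VS ->
  exists j, (j.+1 < size cs)%N /\ factor_iso (nth 0%VS cs j) (nth 0%VS cs j.+1) T.
Proof.
move=> [cs_gt0 [cs_0 [cs_last [gcs steps]]]] simT fP nf0.
pose P m := (f @: nth 0%VS cs m != 0)%VS && (m < size cs)%N.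
have exP : exists m, P m.
  by exists (size cs).-1; rewrite /P cs_last ltn_predL cs_gt0 andbT.
case: (ex_minnP exP) => -[|j] /andP [nfj ltj] minP.
  by move: nfj; rewrite cs_0 limg0 eqxx.
have fj0 : (f @: nth 0%VS cs j = 0)%VS.
  apply/eqP; apply: contraT => nfj'.
  by have := minP j; rewrite /P nfj' (ltnW ltj) ltnn => /(_ isT).
exists j; split=> //; exists p, f; split; first by move=> a v _; apply: fP.1.
split; first by move=> i v; rewrite memv_cap => /andP [_]; apply: fP.2.
split.
  have [img0 | //] := simT.2 _ (pmorph_img_gsub fP (gcs _ ltj)).
  by move: nfj; rewrite img0 eqxx.
have [sub_j [_ maxj]] := steps j ltj.
have sjK : (nth 0%VS cs j <= nth 0%VS cs j.+1 :&: lker f)%VS.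
  by rewrite subv_cap sub_j lkerE fj0 eqxx.
have [// | Kfull] := maxj _ (pmorph_ker_gsub fP (gcs _ ltj)) sjK (capvSl _ _).
by move: nfj; rewrite -lkerE -Kfull capvSr.
Qed.

Lemma factor_iso_hom_onto (U V : {vspace M}) :
  semisimple A -> gsubmod V -> factor_iso U V T ->
  exists g : 'Hom(M, T),
    (forall a v, g (act M a v) = act T a (g v)) /\ limg g = fullv.
Proof.
move=> ssA gV [p [f [fm [_ [fV _]]]]].
have [W [gW _ dxVW VW]] := gsub_compl ssA gV (gsubf M) (subvf V).
exists (f \o daddv_pi V W)%VF; split=> [a v | ].
  by rewrite !comp_lfunE daddv_pi_act // fm // memv_pi.
apply/eqP; rewrite eqEsubv subvf -{1}fV /=.
apply/subvP => _ /memv_imgP [v Vv ->]; apply/memv_imgP; exists v; first exact: memvf.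
by rewrite comp_lfunE daddv_pi_id.
Qed.

End CompositionFactor.

Section LeftIdealModule.
Variables (F : fieldType) (A : superalg F) (L : {vspace A}).
Hypothesis HL : lideal L.
Variable q : bool.

Definition lideal_incl : 'Hom(subvs_of L, A) := linfun vsval.

Lemma lideal_inclE x : lideal_incl x = vsval x.
Proof. exact: lfunE. Qed.

Definition lideal_part (i : bool) : {vspace subvs_of L} :=
  locked (lideal_incl @^-1: spart A (i (+) q))%VS.

Lemma mem_lideal_part i x : (x \in lideal_part i) = (vsval x \in spart A (i (+) q)).
Proof. by rewrite /lideal_part -lock -memv_preim lideal_inclE. Qed.

Definition lideal_act (a : A) (x : subvs_of L) : subvs_of L :=
  vsproj L (smul a (vsval x)).

Lemma lideal_actE a x : vsval (lideal_act a x) = smul a (vsval x).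
Proof. exact/vsprojK/(HL.2 a)/subvsP. Qed.

Fact lideal_part_direct : directv (lideal_part false + lideal_part true).
Proof.
suff /eqP cap0 : (lideal_part false :&: lideal_part true == 0)%VS by exact/directv_addP.
rewrite -subv0; apply/subvP => x /memv_capP [].
rewrite !mem_lideal_part /= memv0 => x0 x1.
have : vsval x \in (spart A q :&: spart A (~~ q))%VS by rewrite memv_cap x0 x1.
rewrite (capv_parts (spart_direct A)) memv0 => /eqP x_0.
by apply/eqP/subvs_inj; rewrite x_0 linear0.
Qed.

Fact lideal_part_full : (lideal_part false + lideal_part true)%VS = fullv.
Proof.
apply/eqP; rewrite eqEsubv subvf /=; apply/subvP => x _.
have Lpr i : gproj (spart A) i (vsval x) \in L.
  exact: (graded_gproj (spart_direct A) i (HL.1 : graded (spart A) L) (subvsP x)).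
rewrite -[x]vsvalK -(gproj_sum (spart_direct A) (spart_full A) q (vsval x)) linearD.
by rewrite memv_add // mem_lideal_part vsprojK ?Lpr //= ?addNb gproj_mem.
Qed.

Fact lideal_act_linl k (a a' : A) v :
  lideal_act (k *: a + a') v = k *: lideal_act a v + lideal_act a' v.
Proof. by rewrite /lideal_act smul_linl linearP. Qed.

Fact lideal_act_linr k (a : A) v w :
  lideal_act a (k *: v + w) = k *: lideal_act a v + lideal_act a w.
Proof. by rewrite /lideal_act linearP /= smul_linr linearP. Qed.

Fact lideal_act1 v : lideal_act (sone A) v = v.
Proof. by rewrite /lideal_act smul1l vsvalK. Qed.

Fact lideal_actM a b v : lideal_act (smul a b) v = lideal_act a (lideal_act b v).
Proof. by rewrite /lideal_act lideal_actE smulA. Qed.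

Fact lideal_act_grade (i j : bool) a v : a \in spart A i -> v \in lideal_part j ->
  lideal_act a v \in lideal_part (i (+) j).
Proof.
by rewrite !mem_lideal_part lideal_actE -addbA; apply: spart_mul.
Qed.

Definition lideal_mod : supermod A :=
  @SuperMod F A (subvs_of L) lideal_part lideal_part_direct lideal_part_full
    lideal_act lideal_act_linl lideal_act_linr lideal_act1 lideal_actM
    lideal_act_grade.

Lemma lideal_incl_pmorph : pmorph (M := lideal_mod) (N := regmod A) q lideal_incl.
Proof.
split=> [a x | i x]; first by rewrite !lideal_inclE lideal_actE.
by rewrite lideal_inclE -mem_lideal_part.
Qed.

Lemma ideal_iso_lideal_mod : ideal_iso lideal_mod L.
Proof.
exists q, lideal_incl; have [inclM inclP] := lideal_incl_pmorph.
split=> //; split=> //; split.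
  by apply/eqP/lker0P => x y; rewrite !lideal_inclE; apply: subvs_inj.
apply/vspaceP => y; apply/memv_imgP/idP => [[x _ ->] | Ly].
  by rewrite lideal_inclE subvsP.
by exists (vsproj L y); rewrite ?memvf // lideal_inclE vsprojK.
Qed.

Lemma simple_lideal_mod : min_lideal L -> simple_mod lideal_mod.
Proof.
move=> [_ nL0 minL]; split.
  apply: contra nL0 => /eqP full0; rewrite -subv0; apply/subvP => y Ly.
  have : vsproj L y \in (fullv : {vspace lideal_mod}) by apply: memvf.
  rewrite full0 !memv0 => /eqP y0.
  by rewrite -(vsprojK Ly) y0 linear0 eqxx.
move=> U gU; have gIU := pmorph_img_gsub lideal_incl_pmorph gU.
have sIU : (lideal_incl @: U <= L)%VS.
  by apply/subvP => _ /memv_imgP [x _ ->]; rewrite lideal_inclE subvsP.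
have [IU0 | IUL] := minL _ gIU sIU; [left | right].
  apply/eqP; rewrite -subv0; apply/subvP => x Ux; rewrite memv0.
  have : lideal_incl x \in (lideal_incl @: U)%VS by apply: memv_img.
  by rewrite IU0 memv0 lideal_inclE => /eqP x0; apply/eqP/subvs_inj; rewrite x0 linear0.
apply/eqP; rewrite eqEsubv subvf /=; apply/subvP => x _.
have : vsval x \in (lideal_incl @: U)%VS by rewrite IUL subvsP.
by case/memv_imgP => x' Ux'; rewrite lideal_inclE => /subvs_inj ->.
Qed.

End LeftIdealModule.

Section IdealIso.
Variables (F : fieldType) (A : superalg F) (T : supermod A) (L : {vspace A}).
Hypothesis TL : ideal_iso T L.

Lemma ideal_iso_lideal : lideal L.
Proof.
have [p [chi [chiM [chiP [_ <-]]]]] := TL.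
exact: (pmorph_img_gsub (N := regmod A) (conj chiM chiP) (gsubf T)).
Qed.

Lemma inJ_ideal_iso y : y \in L -> inJ T y.
Proof. by exists [:: L]; rewrite big_seq1; split=> // L'; rewrite inE => /eqP ->. Qed.

Lemma ideal_iso_inv : exists (p : bool) (g : 'Hom(A, T)),
  [/\ forall a y, y \in L -> g (smul a y) = act T a (g y),
      forall i y, y \in L -> y \in spart A i -> g y \in mpart T (i (+) p) &
      forall y, y \in L -> g y = 0 -> y = 0].
Proof.
have [p [chi [chiM [chiP [chi_inj chi_img]]]]] := TL.
have chiK : cancel chi (chi^-1)%VF by apply/lker0_lfunK/eqP.
have chiVK y : y \in L -> chi ((chi^-1)%VF y) = y.
  by rewrite -chi_img; apply: limg_lfunVK.
exists p, (chi^-1)%VF; split=> [a y Ly | i y Ly Ay | y Ly gy0].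
- apply: (can_inj chiK); rewrite chiM !chiVK //.
  exact: (ideal_iso_lideal.2 a y Ly).
- apply: (pmorph_inj_mpart (N := regmod A) (conj chiM chiP) (gsubf T)).
  + by move=> t _ chit0; apply: (can_inj chiK); rewrite chit0 linear0.
  + exact: memvf.
  + by rewrite chiVK.
- by rewrite -(chiVK y Ly) gy0 linear0.
Qed.

End IdealIso.

Section SemisimpleAlgebra.
Variables (F : fieldType) (A : superalg F).
Hypothesis ssA : semisimple A.

Lemma min_lideal_exists (M : {vspace A}) : lideal M -> M != 0%VS ->
  exists2 L, min_lideal L & (L <= M)%VS.
Proof.
move=> gM nM0; pose P U := [/\ lideal U, U != 0%VS & (U <= M)%VS].
have [L [[gL nL0 sLM] _ minL]] := vspace_min (And3 gM nM0 (subvv M) : P M).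
exists L => //; split=> // U gU sUL; have [-> | nU0] := eqVneq U 0%VS; first by left.
by right; apply: minL => //; split=> //; apply: subv_trans sUL sLM.
Qed.

Lemma lideal_sum_simple (M : {vspace A}) b : lideal M -> b \in M ->
  exists r (T : nat -> supermod A) (e : nat -> A),
    (forall i, (i < r)%N ->
       simple_mod (T i) /\ exists2 L, ideal_iso (T i) L & e i \in L) /\
    b = \sum_(i < r) e i.
Proof.
elim: {M}(\dim M).+1 {-2}M (ltnSn (\dim M)) b => // k IH M ltMk b gM Mb.
have [M0 | nM0] := eqVneq M 0%VS.
  exists 0%N, (fun=> regmod A), (fun=> 0); split=> //.
  by rewrite big_ord0; apply/eqP; rewrite -memv0 -M0.
have [L minL sLM] := min_lideal_exists gM nM0; have [gL nL0 _] := minL.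
have [W [gW sWM dxLW LW]] := gsub_compl ssA gL gM sLM.
have ltWk : (\dim W < k)%N.
  rewrite (leq_trans _ (ltMk : \dim M <= k)%N) // -LW dimv_disjoint_sum //.
  by rewrite -addn1 addnC leq_add2r lt0n dimv_eq0.
move: Mb; rewrite -LW => /memv_addP [l Ll [w Ww ->]].
have [r [T [e [Te ->]]]] := IH W ltWk w gW Ww.
exists r.+1, (fun i => if i is i'.+1 then T i' else lideal_mod gL false).
exists (fun i => if i is i'.+1 then e i' else l); rewrite big_ord_recl /=.
split.
  case=> [_ | i]; last exact: Te.
  by split; [exact: simple_lideal_mod | exists L => //; apply: ideal_iso_lideal_mod].
by [].
Qed.

End SemisimpleAlgebra.

Section SimpleModule.
Variables (F : fieldType) (A : superalg F) (S : supermod A).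
Hypotheses (ssA : semisimple A) (simS : simple_mod S).

Lemma simple_mod_homogeneous : exists (q : bool) (s : S), s \in mpart S q /\ s != 0.
Proof.
have v0 : vpick (fullv : {vspace S}) != 0 by rewrite vpick0; case: simS.
have [v1_0 | v1_n0] := eqVneq (gproj (mpart S) true (vpick fullv)) 0.
  exists false, (gproj (mpart S) false (vpick fullv)); split; first exact: gproj_mem.
  apply: contraNneq v0 => v0_0.
  by rewrite -(gproj_sum (mpart_direct S) (mpart_full S) false (vpick fullv)) /= v0_0 v1_0 addr0.
by exists true, (gproj (mpart S) true (vpick fullv)); split; first exact: gproj_mem.
Qed.

Lemma simple_mod_section : exists (q : bool) (s : S) (phi : 'Hom(S, A)),
  [/\ s \in mpart S q, forall t, act S (phi t) s = t & pmorph (N := regmod A) q phi].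
Proof.
have [q [s [Ss s_n0]]] := simple_mod_homogeneous.
pose rho : 'Hom(regmod A, S) := lfun_of_linear (act_linear_l s).
have rhoE b : rho b = act S b s by apply: lfun_of_linearE.
have rhoP : pmorph q rho.
  by split=> [a b | i b Ab]; rewrite !rhoE ?actM //; apply: act_grade.
have gK : gsubmod (lker rho) by have := pmorph_ker_gsub rhoP (gsubf _); rewrite capfv.
have rho_onto : limg rho = fullv.
  have [img0 | //] := simS.2 _ (pmorph_img_gsub rhoP (gsubf _)).
  have : rho (sone A) \in limg rho by apply: memv_img (memvf _).
  by rewrite img0 memv0 rhoE act1 (negbTE s_n0).
have [L [gL _ dxKL KL]] := gsub_compl ssA gK (gsubf _) (subvf _).
have dxLK : (L :&: lker rho = 0)%VS by rewrite capvC.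
have LK : (L + lker rho)%VS = fullv by rewrite addvC.
pose pi := daddv_pi L (lker rho).
have rho_pi x : rho (pi x) = rho x.
  have LKx : x \in (L + lker rho)%VS by rewrite LK memvf.
  have /eqP rho_pi' : rho (daddv_pi (lker rho) L x) == 0 by rewrite -memv_ker memv_pi.
  by rewrite -{2}(daddv_pi_add dxLK LKx) lfunD rho_pi' addr0.
have rho_inj x : x \in L -> rho x = 0 -> x = 0.
  by move=> Lx /eqP; rewrite -memv_ker => Kx; apply/eqP; rewrite -memv0 -dxKL memv_cap Kx.
pose phi := (pi \o rho^-1)%VF.
have phiL t : phi t \in L by rewrite comp_lfunE memv_pi.
have rho_phi t : rho (phi t) = t.
  by rewrite comp_lfunE rho_pi limg_lfunVK // rho_onto memvf.
exists q, s, phi; split=> // [t | ]; first by rewrite -rhoE rho_phi.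
split=> [a t | i t St].
  apply/eqP; rewrite -subr_eq0; apply/eqP/rho_inj.
    by rewrite memvB ?phiL //; apply: gL.2.
  by rewrite linearB /= rhoP.1 !rho_phi subrr.
apply: (pmorph_inj_mpart rhoP gL rho_inj (phiL t)).
by rewrite rho_phi.
Qed.

End SimpleModule.

Section Iota.
Variables (F : fieldType) (B : nat -> superalg F).
Variable tens : forall m n, B m -> B n -> B (m + n)%N.
Hypothesis HC : monoidal_super tens.
Variable n : nat.
Local Notation io := (iota1 tens (n := n)).

Lemma iota1_linear : linear io.
Proof. by move=> k g g'; apply: (tens_linr HC k (sone (B 1)) g g'). Qed.

Lemma iota1_even i b : b \in spart (B n) i -> io b \in spart (B n.+1) i.
Proof. exact: (tens_even HC (spart_one (B 1))). Qed.

Lemma iota1_mul (g k : B n) : io (smul g k) = smul (io g) (io k).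
Proof.
have mul_hom j g' : g' \in spart (B n) j -> io (smul g' k) = smul (io g') (io k).
  move=> Bg'; rewrite /iota1 (tens_interchange HC (i := false) (sone (B 1)) k Bg' (spart_one _)).
  by rewrite expr0 scale1r smul1l.
rewrite -(gproj_sum (spart_direct (B n)) (spart_full (B n)) false g) smulDl.
rewrite !(linear_funD iota1_linear) smulDl.
by rewrite !(mul_hom _ _ (gproj_mem _ _ _)).
Qed.

End Iota.

Section InducedModule.
Variables (F : fieldType) (B : nat -> superalg F).
Variable tens : forall m n, B m -> B n -> B (m + n)%N.
Hypothesis HC : monoidal_super tens.
Variables (n : nat) (S : supermod (B n)) (q : bool) (s : S) (phi : 'Hom(S, B n)).
Hypotheses (Ss : s \in mpart S q) (phiK : forall t, act S (phi t) s = t)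
  (phiP : pmorph (N := regmod (B n)) q phi).
Local Notation io := (iota1 tens (n := n)).

Lemma phi_mul_gen t : smul (phi t) (phi s) = phi t.
Proof. by rewrite -[RHS](congr1 phi (phiK t)) phiP.1. Qed.

Lemma inJ_gen : inJ S (phi s).
Proof.
apply: (@inJ_ideal_iso _ _ S (limg phi)); last exact: memv_img (memvf _).
exists q, phi; have [phiM phiG] := phiP; do 3!split=> //.
by apply/eqP/lker0P => t t' phit; rewrite -(phiK t) -(phiK t') phit.
Qed.

Definition ind_gen : B n.+1 := io (phi s).

Lemma ind_gen_even : ind_gen \in spart (B n.+1) false.
Proof. by apply: (iota1_even HC); rewrite -(addbb q); apply: phiP.2. Qed.

Lemma ind_gen_idem : smul ind_gen ind_gen = ind_gen.
Proof. by rewrite -(iota1_mul HC) ?phi_mul_gen. Qed.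

Definition ind_ideal : {vspace B n.+1} :=
  limg (lfun_of_linear (smul_linear_l ind_gen)).

Lemma ind_ideal_mul x : smul x ind_gen \in ind_ideal.
Proof. by apply/memv_imgP; exists x; rewrite ?memvf ?lfun_of_linearE. Qed.

Lemma ind_ideal_gen y : y \in ind_ideal -> smul y ind_gen = y.
Proof. by case/memv_imgP => x _ ->; rewrite lfun_of_linearE -smulA ind_gen_idem. Qed.

Lemma ind_ideal_lideal : lideal ind_ideal.
Proof.
apply: (pmorph_img_gsub (M := regmod _) (N := regmod _) (p := false)) (gsubf _).
split=> [a x | i x Bx]; rewrite !lfun_of_linearE /=; first exact/esym/smulA.
by apply: spart_mul Bx ind_gen_even.
Qed.

Definition ind_mod : supermod (B n.+1) := lideal_mod ind_ideal_lideal q.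

Definition ind_unit : 'Hom(S, ind_mod) :=
  (linfun (vsproj ind_ideal) \o lfun_of_linear (iota1_linear HC (n := n)) \o phi)%VF.

Lemma ind_unitE t : vsval (ind_unit t) = io (phi t).
Proof.
rewrite !comp_lfunE lfunE lfun_of_linearE vsprojK //=.
by rewrite -phi_mul_gen (iota1_mul HC) ind_ideal_mul.
Qed.

Definition ind_cyc : ind_mod := vsproj ind_ideal ind_gen.

Lemma ind_cycE : vsval ind_cyc = ind_gen.
Proof. by rewrite vsprojK // -ind_gen_idem ind_ideal_mul. Qed.

Lemma ind_unit_cyc : ind_unit s = ind_cyc.
Proof. by apply: subvs_inj; rewrite ind_unitE ind_cycE. Qed.

Lemma act_ind_cyc (x : ind_mod) : act ind_mod (vsval x) ind_cyc = x.
Proof. by apply: subvs_inj; rewrite (lideal_actE ind_ideal_lideal) ind_cycE ind_ideal_gen ?subvsP. Qed.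

Lemma ind_unit_induced : is_induced io ind_unit.
Proof.
have unitP : res_hom io ind_unit.
  split=> [b t | i t St]; first by apply: subvs_inj; rewrite (lideal_actE ind_ideal_lideal) !ind_unitE phiP.1 (iota1_mul HC).
  by rewrite mem_lideal_part ind_unitE; apply/(iota1_even HC)/phiP.2.
split=> // N g [gM gP].
have h_lin : linear (fun x : ind_mod => act N (vsval x) (g s)).
  by move=> k x y; rewrite linearP /= act_linl.
pose h : 'Hom(ind_mod, N) := lfun_of_linear h_lin.
have hE x : h x = act N (vsval x) (g s) := lfun_of_linearE h_lin x.
exists h; split.
  split; [split=> [a x | i x Bx] |].
  - by rewrite !hE (lideal_actE ind_ideal_lideal) actM.
  - rewrite hE addbF -[i](addbK q); apply: act_grade (gP q s Ss).
    by rewrite -mem_lideal_part.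
  - by apply/lfunP => t; rewrite comp_lfunE hE ind_unitE -gM phiK.
move=> h' [[h'M _] h'u]; apply/lfunP => x.
by rewrite hE -{2}(act_ind_cyc x) h'M -ind_unit_cyc -(comp_lfunE h' ind_unit) h'u.
Qed.

End InducedModule.

Section Main.
Variables (F : fieldType) (B : nat -> superalg F).
Variable tens : forall m n, B m -> B n -> B (m + n)%N.
Hypotheses (HC : monoidal_super tens) (HC3 : forall n, semisimple (B n)).
Variable sub : forall m k, supermod (B m) -> supermod (B k) -> Prop.
Hypothesis HC4 : cond_C4 tens sub.
Variables (n : nat) (S : supermod (B n)) (q : bool) (s : S) (phi : 'Hom(S, B n)).
Hypotheses (HS : simple_mod S) (Ss : s \in mpart S q)
  (phiK : forall t, act S (phi t) s = t) (phiP : pmorph (N := regmod (B n)) q phi).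
Local Notation io := (iota1 tens (n := n)).
Local Notation Ind := (ind_mod HC Ss phiP).
Variable cs : seq {vspace Ind}.
Hypothesis cs_series : comp_series cs.

Lemma sub_iff_comp_factor (T : supermod (B n.+1)) : simple_mod T ->
  @sub n n.+1 S T <-> exists j,
    (j.+1 < size cs)%N /\ factor_iso (nth 0%VS cs j) (nth 0%VS cs j.+1) T.
Proof.
move=> simT; have [k multk] := mult_is_exists cs T.
rewrite (HC4 HS (ind_unit_induced HC Ss phiK phiP) cs_series simT multk).
exact: mult_is_gt0.
Qed.

Lemma gen_ideal_of_sub (T : supermod (B n.+1)) x : simple_mod T -> @sub n n.+1 S T ->
  inJ T x -> in_gen_ideal io (inJ S) x.
Proof.
move=> simT ST [ls [lsT xls]]; have [_ [_ [_ [gcs _]]]] := cs_series.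
have [j [ltj Tj]] := (sub_iff_comp_factor simT).1 ST.
have [g [gM g_onto]] := factor_iso_hom_onto (@HC3 n.+1) (gcs _ ltj) Tj.
apply: (sumv_ind xls); [exact: in_gen_ideal0 | exact: in_gen_idealD |].
move=> L y /lsT [p [h [hM [_ [_ h_img]]]]]; rewrite -h_img => /memv_imgP [t _ ->].
have /memv_imgP [v _ ->] : t \in limg g by rewrite g_onto memvf.
rewrite -(act_ind_cyc phiK v) gM hM -(ind_ideal_gen HC phiK phiP (subvsP v)).
exact/in_gen_ideal_gen/(inJ_gen phiK phiP).
Qed.

Lemma sub_of_mul_ind_gen (T : supermod (B n.+1)) L c k : simple_mod T ->
  ideal_iso T L -> c \in L -> c \in spart (B n.+1) k -> c != 0 ->
  smul (ind_gen tens s phi) c = c -> @sub n n.+1 S T.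
Proof.
move=> simT TL Lc Bc c_n0 gen_c; have [p [g [gM gP g_inj]]] := ideal_iso_inv TL.
have Lxc (x : B n.+1) : smul x c \in L by apply: (ideal_iso_lideal TL).2.
have Phi_lin : linear (fun x : Ind => g (smul (vsval x) c)).
  by move=> a x y; rewrite linearP /= smul_linl linearP.
pose Phi : 'Hom(Ind, T) := lfun_of_linear Phi_lin.
have PhiE x : Phi x = g (smul (vsval x) c) := lfun_of_linearE Phi_lin x.
have PhiP : pmorph (q (+) k (+) p) Phi.
  split=> [a x | i x]; rewrite !PhiE; first by rewrite (lideal_actE (ind_ideal_lideal HC Ss phiP)) -smulA gM.
  rewrite mem_lideal_part !addbA => Bx; exact: gP (Lxc _) (spart_mul Bx Bc).
apply/(sub_iff_comp_factor simT)/(factor_iso_of_pmorph cs_series simT PhiP).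
apply: contraNneq c_n0 => Phi0; apply/eqP/(g_inj _ Lc).
have : Phi (ind_cyc HC Ss phiP) \in limg Phi by apply: memv_img (memvf _).
by rewrite Phi0 memv0 PhiE (ind_cycE HC Ss phiK phiP) gen_c => /eqP.
Qed.

Lemma sub_of_inJ_mul (T : supermod (B n.+1)) L w y : simple_mod T ->
  ideal_iso T L -> w \in L -> inJ S y -> smul (io y) w != 0 -> @sub n n.+1 S T.
Proof.
move=> simT TL Lw [ls [lsS yls]] yw_n0.
have [L' [y' [L'ls L'y' y'w]]] :
    exists L' y', [/\ L' \in ls, y' \in L' & smul (io y') w != 0].
  apply: NNPP => none; move/negP: yw_n0; apply; apply/eqP.
  apply: (sumv_ind (Q := fun y => smul (io y) w = 0) yls).
  - by rewrite (linear_fun0 (iota1_linear HC (n := n))) smul0l.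
  - by move=> a b a0 b0; rewrite (linear_funD (iota1_linear HC (n := n))) smulDl a0 b0 addr0.
  - move=> L0 y0 L0ls L0y0; apply/eqP; apply: contraT => y0w.
    by case: none; exists L0, y0.
have [p' [chi [chiM [chiP [_ chi_img]]]]] := lsS L' L'ls.
move: L'y' y'w; rewrite -chi_img => /memv_imgP [t _ ->].
have chiE t' : chi t' = smul (phi t') (chi s) by rewrite -chiM phiK.
rewrite chiE (iota1_mul HC) -smulA => /negP chisw_n0.
have {chisw_n0} csw_n0 : smul (io (chi s)) w != 0.
  by apply/negP => /eqP chisw0; apply: chisw_n0; rewrite chisw0 smul0r.
have gL := ideal_iso_lideal TL.
have [j cj_n0] : exists j, smul (io (chi s)) (gproj (spart (B n.+1)) j w) != 0.
  have [c0 | ] := eqVneq (smul (io (chi s)) (gproj (spart (B n.+1)) false w)) 0;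
    last by exists false.
  exists true; apply: contraNneq csw_n0 => c1.
  by rewrite -(gproj_sum (spart_direct _) (spart_full _) false w) smulDr c0 c1 addr0.
apply: (sub_of_mul_ind_gen simT TL _ _ cj_n0).
- by apply: gL.2; exact: (gsub_gproj (M := regmod _) j gL Lw).
- exact: spart_mul (iota1_even HC (chiP q s Ss)) (gproj_mem _ _ _).
by rewrite smulA -(iota1_mul HC) -chiE.
Qed.

Lemma sub_of_gen_ideal_mul (T : supermod (B n.+1)) L a w :
  in_gen_ideal io (inJ S) a -> simple_mod T -> ideal_iso T L -> w \in L ->
  smul a w != 0 -> @sub n n.+1 S T.
Proof.
move=> [l [lP ->]] simT TL Lw; rewrite smul_suml => /sum_neq0 [[[x y] z] /lP /= Sy].
rewrite -!smulA => xyzw_n0; apply: (@sub_of_inJ_mul T L (smul z w) y simT TL _ Sy).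
  by apply: (ideal_iso_lideal TL).2.
by apply: contraNneq xyzw_n0 => ->; rewrite smul0r.
Qed.

Lemma gen_ideal_sum_simple a : in_gen_ideal io (inJ S) a ->
  exists (r : nat) (T : nat -> supermod (B n.+1)) (x : nat -> B n.+1),
    (forall i, (i < r)%N ->
       [/\ simple_mod (T i), @sub n n.+1 S (T i) & inJ (T i) (x i)]) /\
    a = \sum_(i < r) x i.
Proof.
move=> Ga; have [r [T [e [Te one_e]]]] :=
  lideal_sum_simple (@HC3 n.+1) (gsubf (regmod _)) (memvf (sone (B n.+1))).
pose idx := [seq i <- iota 0 r | smul a (e i) != 0].
exists (size idx), (fun j => T (nth 0%N idx j)), (fun j => smul a (e (nth 0%N idx j))).
split=> [j ltj | ].
  have := mem_nth 0%N ltj; rewrite mem_filter mem_iota /= => /andP [ae_n0 lti].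
  have [simT [L TL Le]] := Te _ lti; have aeL := (ideal_iso_lideal TL).2 a _ Le.
  by split=> //; [apply: sub_of_gen_ideal_mul Ga simT TL Le ae_n0 | exact: (inJ_ideal_iso TL aeL)].
have -> : \sum_(j < size idx) smul a (e (nth 0%N idx j)) = \sum_(i <- idx) smul a (e i).
  by rewrite (big_nth 0%N) big_mkord.
have iotaE : iota 0 r = index_iota 0 r by rewrite /index_iota subn0.
rewrite /idx iotaE big_filter big_mkcond big_mkord -{1}[a]smul1r one_e smul_sumr.
by apply: eq_bigr => i _; case: eqP.
Qed.

Lemma sum_simple_gen_ideal a :
  (exists (r : nat) (T : nat -> supermod (B n.+1)) (x : nat -> B n.+1),
    (forall i, (i < r)%N ->
       [/\ simple_mod (T i), @sub n n.+1 S (T i) & inJ (T i) (x i)]) /\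
    a = \sum_(i < r) x i) ->
  in_gen_ideal io (inJ S) a.
Proof.
move=> [r [T [x [Tx ->]]]]; apply: in_gen_ideal_sum => i lti.
by have [simT ST Tx'] := Tx i lti; apply: gen_ideal_of_sub ST Tx'.
Qed.

End Main.

Theorem lemma3p6 (F : fieldType) (B : nat -> superalg F)
    (tens : forall m n, B m -> B n -> B (m + n)%N)
    (HC123 : monoidal_super tens)
    (HC3 : forall n, semisimple (B n))
    (sub : forall m k, supermod (B m) -> supermod (B k) -> Prop)
    (Hsub : class_porder sub)
    (HC4 : cond_C4 tens sub)
    (n : nat) (S : supermod (B n)) (HS : simple_mod S) (a : B n.+1) :
  in_gen_ideal (iota1 tens (n:=n)) (inJ S) a <->
  exists (r : nat) (T : nat -> supermod (B n.+1)) (x : nat -> B n.+1),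
    (forall i, (i < r)%N ->
       [/\ simple_mod (T i), sub n n.+1 S (T i) & inJ (T i) (x i)]) /\
    a = \sum_(i < r) x i.
Proof.
have [q [s [phi [Ss phiK phiP]]]] := simple_mod_section (HC3 n) HS.
have [cs cs_series] := comp_series_exists (ind_mod HC123 Ss phiP).
split; first exact: (gen_ideal_sum_simple HC3 HC4 HS phiK cs_series).
exact: (sum_simple_gen_ideal HC3 HC4 HS phiK cs_series).
Qed.
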